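(* For every $d\ge1$, $$\frac{\sqrt2^{\,d}}{(d+1)!\,d}\le H_{1,d}\le\frac{2^{d+1}}{(d+1)!}.$$
   Context: For integers $i,d\ge -1$ define $f_{-1,-1}=1$, $f_{-1,d}=0$ for $d\ge0$, $f_{i,-1}=0$ for $i\ge0$, and $f_{i,d}=(i+1)!\,S(d+1,i+1)$ for $i,d\ge0$, where $S(\cdot,\cdot)$ is the Stirling number of the second kind. For $d\ge0$ define rational numbers $F_{i,d}$, $-1\le i\le d$, by $F_{d,d}=1$ and recursively for $-1\le i\le d-1$, $F_{i,d}=\frac{1}{(d+1)!-(i+1)!}\sum_{j=i+1}^{d}f_{i,j}F_{j,d}$. Let $F_d(z)=\sum_{i=-1}^dF_{i,d}z^{d-i}$, and define the $H$-polynomial $H_d(z)=F_d(z-1)=\sum_{i=0}^{d+1}H_{i,d}z^{d+1-i}$, which defines the numbers $H_{i,d}$ (in particular $H_{1,d}=F_{0,d}$). *)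

From HB Require Import structures.
From mathcomp Require Import all_boot all_order all_algebra.
Set Implicit Arguments. Unset Strict Implicit. Unset Printing Implicit Defensive.
Import Order.TTheory GRing.Theory Num.Theory.
Local Open Scope ring_scope.

Fixpoint stirling2 (n k : nat) : nat :=
  match n, k with
  | 0, 0 => 1
  | 0, _.+1 => 0
  | _.+1, 0 => 0
  | n'.+1, k'.+1 => (k'.+1 * stirling2 n' k'.+1 + stirling2 n' k')%N
  end.

(* Shifted indices: fsh a b = f_{a-1,b-1} (a = i+1, b = d+1). *)
Definition fsh (a b : nat) : nat :=
  match a, b with
  | 0, 0 => 1
  | 0, _.+1 => 0
  | _.+1, 0 => 0
  | a'.+1, b'.+1 => (a'.+1`! * stirling2 b'.+1 a'.+1)%N
  end.

(* Fseq d m = [:: F_{d-m-1+... } ] : the sequence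
   [:: Fsh (d+1-m) d; ...; Fsh (d+1) d] (length m+1),
   where Fsh a d = F_{a-1,d}, computed by the downward recursion
   F_{i,d} = 1/((d+1)! - (i+1)!) * sum_{j=i+1}^d f_{i,j} F_{j,d}. *)
Fixpoint Fseq (d m : nat) : seq rat :=
  match m with
  | 0 => [:: 1]
  | m'.+1 =>
      let s := Fseq d m' in
      let a := (d - m')%N in
      ((d.+1)`!%:R - (a`!)%:R)^-1 *
        (\sum_(t < size s) (fsh a (a + 1 + t))%:R * s`_t) :: s
  end.

(* Fsh a d = F_{a-1,d}, for 0 <= a <= d+1. *)
Definition Fsh (a d : nat) : rat := (Fseq d d.+1)`_a.

Definition Fpoly (d : nat) : {poly rat} :=
  \sum_(a < d.+2) Fsh a d *: 'X^(d.+1 - a).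

Definition Hpoly (d : nat) : {poly rat} := Fpoly d \Po ('X - 1).

Definition Hcoef (i d : nat) : rat := (Hpoly d)`_(d.+1 - i).

From HB Require Import structures.
From mathcomp Require Import all_boot all_order all_algebra.
From mathcomp Require Import zify ring lra.
Set Implicit Arguments. Unset Strict Implicit. Unset Printing Implicit Defensive.
Import Order.TTheory GRing.Theory Num.Theory.

(* Since F_{-1,d} = 0 and f_{0,j} = 1, the recursion gives
   H_{1,d} = F_{0,d} = (F_{1,d} + ... + F_{d,d}) / ((d+1)! - 1).
   Upper bound: by downward induction F_{i,d} <= C(d+1, i+1); the induction
   step rests on S(n,k) <= C(n,k) k^(n-k) and the binomial theorem, and the
   binomials then sum to less than 2^(d+1).
   Lower bound: keeping only the term F_{d,d} = 1 of the recursion gives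
   F_{i,d} >= f_{i,d} / (d+1)!, and f_{1,d} + ... + f_{d,d} is the Fubini
   (ordered Bell) number of d+1 minus 1, which grows at least like
   (d+1)! (10/7)^(d+1) / 2 because 10/7 < 1/ln 2; finally sqrt 2 <= 10/7. *)

Lemma stirling2_small n k : (n < k)%N -> stirling2 n k = 0%N.
Proof.
elim: n k => [|n IH] [|k] //= lt_nk.
by rewrite (IH _ lt_nk) (IH _ (ltnW lt_nk)) muln0.
Qed.

Lemma stirling2_n1 n : stirling2 n.+1 1 = 1%N.
Proof. by elim: n => //= n; rewrite mul1n addn0 => ->. Qed.

Lemma stirling2_nn n : stirling2 n n = 1%N.
Proof. by elim: n => // n IH; rewrite /= IH stirling2_small // muln0. Qed.

Lemma leq_expSn k e : (k ^ e <= k.+1 ^ e)%N.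
Proof. by case: e => // e; rewrite leq_exp2r. Qed.

Lemma stirling2_le n k : (stirling2 n k <= 'C(n, k) * k ^ (n - k))%N.
Proof.
elim: n k => [|n IH] [|k] //=.
have le_k : (stirling2 n k <= 'C(n, k) * k.+1 ^ (n - k))%N.
  by apply: leq_trans (IH k) _; rewrite leq_mul2l leq_expSn orbT.
rewrite binS mulnDl subSS; case: (ltnP n k.+1) => lt_nk.
  by rewrite bin_small // stirling2_small // muln0 mul0n.
rewrite leq_add // -(subnSK lt_nk) expnS mulnCA leq_mul2l.
by rewrite IH orbT.
Qed.

Lemma fact_mul_expS_le a N : (a`! * a.+1 ^ N <= (a + N)`!)%N.
Proof.
elim: N => [|N IH]; first by rewrite muln1 addn0.
by rewrite addnS factS expnS mulnCA leq_mul // ltnS leq_addr.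
Qed.

Lemma mul_bin_bin n a b : (a <= b <= n)%N ->
  ('C(n, b) * 'C(b, a) = 'C(n, a) * 'C(n - a, b - a))%N.
Proof.
case/andP=> le_ab le_bn.
have facts_gt0 : (0 < a`! * (b - a)`! * (n - b)`!)%N by rewrite !muln_gt0 !fact_gt0.
apply/eqP; rewrite -(eqn_pmul2r facts_gt0); apply/eqP.
have Cna := bin_fact (leq_trans le_ab le_bn).
have Cnb := bin_fact le_bn; have Cba := bin_fact le_ab.
have Cnab : ('C(n - a, b - a) * ((b - a)`! * (n - b)`!) = (n - a)`!)%N.
  have E : (n - a - (b - a) = n - b)%N by lia.
  by rewrite -E bin_fact //; lia.
transitivity n`!; first by rewrite -Cnb -Cba; ring.
by rewrite -Cna -Cnab; ring.
Qed.

Lemma sum_bin_expS N a :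
  (\sum_(t < N) 'C(N, t.+1) * a ^ t.+1 = a.+1 ^ N - 1)%N.
Proof.
have := expnDn 1 a N; rewrite add1n big_ord_recl bin0 exp1n !mul1n => ->.
by rewrite addKn; apply: eq_bigr => i _; rewrite exp1n mul1n.
Qed.

Definition surj (n m : nat) : nat := (m`! * stirling2 n m)%N.

Lemma surjSn n m : surj n.+1 m = (m * (surj n m + surj n m.-1))%N.
Proof. by case: m => [|m]; rewrite /surj /= ?muln0 // factS; ring. Qed.

Lemma surj0S m : surj 0 m.+1 = 0%N.
Proof. by rewrite /surj /= muln0. Qed.

Lemma fshE a b : (0 < a)%N -> (0 < b)%N -> fsh a b = surj b a.
Proof. by case: a => // a; case: b. Qed.

(* Each term is at most a! C(d+1,a) C(d+1-a, t+1) a^(t+1), and the binomial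
   theorem sums these to a! C(d+1,a) ((a+1)^(d+1-a) - 1). *)
Lemma sum_fsh_bin_le d a : (1 <= a <= d)%N ->
  (\sum_(t < (d - a).+1) fsh a (a + 1 + t) * 'C(d.+1, a + 1 + t)
     <= ((d.+1)`! - a`!) * 'C(d.+1, a))%N.
Proof.
case/andP=> a_gt0 le_ad; set N := (d - a).+1.
have dN : d.+1 = (a + N)%N by rewrite /N addnS subnKC.
apply: (@leq_trans (\sum_(t < N) a`! * 'C(d.+1, a) * ('C(N, t.+1) * a ^ t.+1))).
  apply: leq_sum => t _.
  have ab : (a <= (a + t).+1 <= d.+1)%N by rewrite dN; have := ltn_ord t; lia.
  have ta : ((a + t).+1 - a = t.+1)%N by lia.
  have Na : (d.+1 - a = N)%N by rewrite dN addKn.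
  have := mul_bin_bin ab; rewrite Na ta => E.
  rewrite fshE ?addn1 ?addSn // /surj.
  apply: (@leq_trans (a`! * ('C((a + t).+1, a) * a ^ t.+1) * 'C(d.+1, (a + t).+1))).
    by rewrite leq_mul2r leq_mul2l -ta stirling2_le !orbT.
  have -> : (a`! * ('C((a + t).+1, a) * a ^ t.+1) * 'C(d.+1, (a + t).+1)
             = a`! * a ^ t.+1 * ('C(d.+1, (a + t).+1) * 'C((a + t).+1, a)))%N by ring.
  by rewrite E; apply: eq_leq; ring.
rewrite -big_distrr /= sum_bin_expS mulnAC leq_mul2r.
have := fact_mul_expS_le a N; rewrite -dN.
have : (1 <= a.+1 ^ N)%N by rewrite expn_gt0.
move: (a`!) (a.+1 ^ N)%N (d.+1`!) => x y z; nia.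
Qed.

Lemma sum_bin_surj n m :
  (\sum_(j < n.+1) 'C(n, j) * surj (n - j) m = surj n m + surj n m.+1)%N.
Proof.
elim: n m => [|n IH] m.
  by rewrite big_ord1 bin0 mul1n subn0 surj0S addn0.
rewrite big_ord_recl bin0 mul1n subn0.
under eq_bigr => i _ do rewrite lift0 binS subSS mulnDl.
rewrite big_split /= IH addnA.
have -> : (surj n.+1 m + \sum_(i < n.+1) 'C(n, i.+1) * surj (n - i) m
          = \sum_(j < n.+1) 'C(n, j) * surj (n - j).+1 m)%N.
  rewrite big_ord_recr /= bin_small // mul0n addn0.
  rewrite [in RHS]big_ord_recl bin0 mul1n subn0; congr (_ + _)%N.
  by apply: eq_bigr => i _; rewrite lift0 subnSK.
under eq_bigr => j _ do rewrite surjSn mulnCA mulnDr.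
rewrite -big_distrr big_split /= IH.
by case: m => [|k] /=; rewrite ?IH !surjSn /=; ring.
Qed.

Definition fubini (n : nat) : nat := (\sum_(m < n.+1) surj n m)%N.

Lemma fubini_wide n M : (n < M)%N -> (\sum_(m < M) surj n m = fubini n)%N.
Proof.
elim: M => // M IH; rewrite ltnS leq_eqVlt => /orP[/eqP <- //|lt_nM].
by rewrite big_ord_recr /= IH // /surj stirling2_small // muln0 addn0.
Qed.

Lemma fubini_rec n : (0 < n)%N ->
  (fubini n = \sum_(j < n) 'C(n, j.+1) * fubini (n - j.+1))%N.
Proof.
move=> n_gt0.
have sum_fubini : (\sum_(j < n.+1) 'C(n, j) * fubini (n - j)
                   = \sum_(m < n.+2) \sum_(j < n.+1) 'C(n, j) * surj (n - j) m)%N.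
  rewrite exchange_big /=; apply: eq_bigr => j _.
  by rewrite -big_distrr /= fubini_wide // ltnS; lia.
have shifted : (\sum_(m < n.+2) surj n m.+1 = fubini n)%N.
  rewrite -(@fubini_wide n n.+3); last lia.
  rewrite [in RHS]big_ord_recl.
  by case: n n_gt0 {sum_fubini} => // n _; rewrite /surj /= muln0.
move: sum_fubini; under [in RHS]eq_bigr => m _ do rewrite sum_bin_surj.
rewrite big_split /= fubini_wide // shifted big_ord_recl bin0 mul1n subn0.
by move/addnI <-; apply: eq_bigr => i _; rewrite lift0.
Qed.

Local Open Scope ring_scope.

Lemma natr_bin_fact (R : numFieldType) n k : (k <= n)%N ->
  'C(n, k)%:R * (n - k)`!%:R = n`!%:R / k`!%:R :> R.
Proof.
move=> le_kn; rewrite -(bin_fact le_kn) !natrM.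
by field; rewrite pnatr_eq0 -lt0n fact_gt0.
Qed.

Lemma fubini_small : [/\ fubini 0 = 1, fubini 1 = 1, fubini 2 = 3 & fubini 3 = 13]%N.
Proof. by rewrite /fubini /surj !big_ord_recl !big_ord0. Qed.

(* Four terms of the recurrence suffice: (7/10) + (7/10)^2/2 + (7/10)^3/6
   + (7/10)^4/24 >= 1. *)
Lemma fubini_ge n : n`!%:R * (10 / 7) ^+ n <= 2 * (fubini n)%:R :> rat.
Proof.
elim/ltn_ind: n => n IH; case: (ltnP n 4) => [n_lt4|n_ge4].
{ have [f0 f1 f2 f3] := fubini_small.
  case: n {IH} n_lt4 => [|[|[|[|n]]]] n_lt4; last by exfalso.
  all: rewrite ?f0 ?f1 ?f2 ?f3 ?factS ?fact0 ?exprS ?expr0; lra. }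
have first4 : ('C(n, 1) * fubini (n - 1) + 'C(n, 2) * fubini (n - 2)
    + 'C(n, 3) * fubini (n - 3) + 'C(n, 4) * fubini (n - 4) <= fubini n)%N.
  rewrite [fubini n]fubini_rec; last lia.
  rewrite -(big_mkord xpredT (fun k => 'C(n, k.+1) * fubini (n - k.+1))%N).
  rewrite (big_cat_nat (leq0n 4) n_ge4) /=.
  by rewrite big_mkord !big_ord_recl big_ord0 addn0 !addnA leq_addr.
have term k : (0 < k <= 4)%N ->
    n`!%:R / k`!%:R * (10 / 7) ^+ (4 - k) * (10 / 7) ^+ (n - 4)
      <= 2 * ('C(n, k) * fubini (n - k))%:R :> rat.
  move=> k_range; rewrite -mulrA -exprD (_ : (4 - k + (n - 4) = n - k)%N); last lia.
  rewrite -natr_bin_fact; last lia.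
  rewrite natrM mulrCA -mulrA; apply: ler_wpM2l; first exact: ler0n.
  apply: IH; lia.
have pow_n : (10 / 7) ^+ n = (10 / 7) ^+ 4 * (10 / 7) ^+ (n - 4) :> rat.
  by rewrite -exprD subnKC.
move: first4 (term 1%N isT) (term 2%N isT) (term 3%N isT) (term 4%N isT).
rewrite -(ler_nat rat) !natrD pow_n.
have : 0 <= (10 / 7 : rat) ^+ (n - 4) by apply: exprn_ge0; lra.
have : 0 <= (n`!%:R : rat) by rewrite ler0n.
move: (n`!%:R : rat) ((10 / 7 : rat) ^+ (n - 4)) => x y x_ge0 y_ge0.
rewrite !subSS !subn0 !factS fact0 !exprS expr0.
have xy_ge0 : 0 <= x * y by rewrite mulr_ge0.
nra.
Qed.

Lemma coef_exp_XsubC_ge (R : nzRingType) (c : R) n k : (n <= k)%N ->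
  (('X - c%:P) ^+ n)`_k = (k == n)%:R.
Proof.
rewrite leq_eqVlt => /orP[/eqP <-|lt_nk]; last first.
  by rewrite nth_default ?size_exp_XsubC // gtn_eqF.
rewrite eqxx -[n in _`_n]/(n.+1.-1) -(size_exp_XsubC n c) -lead_coefE.
exact/monicP/monic_exp/monicXsubC.
Qed.

Lemma size_Fseq d m : size (Fseq d m) = m.+1.
Proof. by elim: m => //= m ->. Qed.

Lemma nth_Fseq_addn d m k t : (Fseq d (k + m))`_(k + t) = (Fseq d m)`_t.
Proof. by elim: k => //= k IH; rewrite addSn /= IH. Qed.

Lemma Fsh_last d : Fsh d.+1 d = 1.
Proof. by rewrite /Fsh -[d.+1]addn0 nth_Fseq_addn. Qed.

Lemma FshE d a : (a <= d)%N ->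
  Fsh a d = ((d.+1)`!%:R - (a`!)%:R)^-1 *
    \sum_(t < (d - a).+1) (fsh a (a + 1 + t))%:R * Fsh (a + 1 + t) d.
Proof.
move=> le_ad; have dS : d.+1 = (a + (d - a).+1)%N by rewrite addnS subnKC.
rewrite {1}/Fsh; have := nth_Fseq_addn d (d - a).+1 a 0; rewrite addn0 -dS => ->.
rewrite /= subKn // size_Fseq.
congr (_ * _); apply: eq_bigr => t _; congr (_ * _).
by rewrite /Fsh -(nth_Fseq_addn d (d - a) (a + 1)) addn1 addSn subnKC.
Qed.

Lemma Fsh0 d : Fsh 0 d = 0.
Proof. by rewrite FshE // big1 ?mulr0 // => t _; rewrite mul0r. Qed.

Lemma Hcoef1_Fsh d : Hcoef 1 d = Fsh 1 d.
Proof.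
rewrite /Hcoef /Hpoly /Fpoly subn1 /= raddf_sum coef_sum -polyC1.
under eq_bigr => a _ do rewrite /= comp_polyZ comp_Xn_poly coefZ.
rewrite 2!big_ord_recl Fsh0 mul0r add0r /= coef_exp_XsubC_ge ?subSS ?subn0 ?leqnn // eqxx mulr1.
rewrite big1 ?addr0 // => i _; rewrite /bump /= !add1n subSS.
have i_lt_d := ltn_ord i.
by rewrite coef_exp_XsubC_ge ?leq_subr // (_ : (d == d - i.+1)%N = false) ?mulr0 //; lia.
Qed.

Lemma leq_down_ind (P : nat -> Prop) N : P N ->
    (forall a, (a < N)%N -> (forall b, (a < b <= N)%N -> P b) -> P a) ->
  forall a, (a <= N)%N -> P a.
Proof.
move=> PN IH a le_aN; move: {2}(N - a)%N (leqnn (N - a)) => k.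
elim: k a le_aN => [|k IHk] a le_aN le_k.
  by have -> : a = N by lia.
have [lt_aN|] := ltnP a N; last by move=> ?; have -> : a = N by lia.
by apply: IH => // b /andP[lt_ab le_bN]; apply: IHk => //; lia.
Qed.

Lemma fact_lt_factS a d : (0 < a <= d)%N -> (a`! < d.+1`!)%N.
Proof.
case/andP=> a_gt0 le_ad; apply: leq_ltn_trans (leq_fact le_ad) _.
by rewrite factS -[X in (X < _)%N]mul1n ltn_pmul2r ?fact_gt0 // ltnS; lia.
Qed.

Lemma Fsh_ge0 d a : (a <= d.+1)%N -> 0 <= Fsh a d.
Proof.
move: a; apply: leq_down_ind => [|a lt_ad IH]; first by rewrite Fsh_last.
rewrite FshE //; apply: mulr_ge0.
  by rewrite invr_ge0 subr_ge0 ler_nat; apply: leq_fact; lia.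
apply: sumr_ge0 => t _; rewrite mulr_ge0 ?ler0n // IH //.
by have := ltn_ord t; lia.
Qed.

Lemma Fsh_le_bin d a : (0 < a <= d.+1)%N -> Fsh a d <= 'C(d.+1, a)%:R.
Proof.
move=> /andP[a_gt0 le_ad]; move: a le_ad a_gt0.
apply: leq_down_ind => [|a lt_ad IH] a_gt0; first by rewrite Fsh_last binn.
have den_gt0 : 0 < (d.+1)`!%:R - (a`!)%:R :> rat.
  by rewrite subr_gt0 ltr_nat fact_lt_factS // a_gt0 -ltnS.
rewrite FshE // ler_pdivrMl //.
apply: le_trans (_ : (\sum_(t < (d - a).+1) fsh a (a + 1 + t) * 'C(d.+1, a + 1 + t))%:R <= _).
  rewrite natr_sum; apply: ler_sum => t _; rewrite natrM; apply: ler_wpM2l.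
    exact: ler0n.
  by apply: IH; have := ltn_ord t; lia.
rewrite -natrB; last by apply: leq_fact; lia.
by rewrite -natrM ler_nat sum_fsh_bin_le // a_gt0 -ltnS.
Qed.

Lemma Fsh_ge d a : (0 < a <= d.+1)%N -> (fsh a d.+1)%:R / (d.+1)`!%:R <= Fsh a d.
Proof.
case/andP=> a_gt0; rewrite leq_eqVlt => /orP[/eqP->|lt_ad].
  rewrite fshE // /surj stirling2_nn muln1 Fsh_last divff ?lexx //.
  by rewrite pnatr_eq0 -lt0n fact_gt0.
have den_gt0 : 0 < (d.+1)`!%:R - (a`!)%:R :> rat.
  by rewrite subr_gt0 ltr_nat fact_lt_factS // a_gt0 -ltnS.
rewrite FshE -1?ltnS // big_ord_recr /=.
have -> : (a + 1 + (d - a) = d.+1)%N by lia.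
rewrite Fsh_last mulr1.
apply: (@le_trans _ _ ((fsh a d.+1)%:R / ((d.+1)`!%:R - (a`!)%:R))).
  apply: ler_wpM2l; first exact: ler0n.
  rewrite lef_pV2 ?posrE ?ltr0n ?fact_gt0 //.
  by rewrite lerBlDr lerDl ler0n.
rewrite mulrC ler_pM2l ?invr_gt0 // lerDr.
apply: sumr_ge0 => t _; apply: mulr_ge0; first exact: ler0n.
by apply: Fsh_ge0; have := ltn_ord t; lia.
Qed.

Lemma Fsh1E d : (0 < d)%N ->
  Fsh 1 d = (\sum_(t < d) Fsh t.+2 d) / ((d.+1)`!%:R - 1).
Proof.
move=> d_gt0; rewrite FshE // mulrC subn1 prednK //; congr (_ / _).
by apply: eq_bigr => t _; rewrite fshE // /surj stirling2_n1 mul1r.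
Qed.

Lemma sum_bin_ge2 n : (\sum_(t < n) 'C(n.+1, t.+2) + n.+2 = 2 ^ n.+1)%N.
Proof.
have := sum_bin_expS n.+1 1; rewrite big_ord_recl bin1 exp1n muln1.
under eq_bigr => i _ do rewrite lift0 exp1n muln1.
have : (0 < 2 ^ n.+1)%N by rewrite expn_gt0.
set s := (\sum_(t < n) _)%N; lia.
Qed.

Lemma expn2_le_factS n : (2 ^ n <= n.+1`!)%N.
Proof. by elim: n => // n IH; rewrite expnS factS leq_mul. Qed.

Lemma fubiniS n : fubini n.+1 = (1 + \sum_(t < n) surj n.+1 t.+2)%N.
Proof.
rewrite /fubini 2!big_ord_recl /surj muln0 add0n stirling2_n1.
by congr (_ + _)%N; apply: eq_bigr => i _; rewrite !lift0.
Qed.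

Lemma Fsh1_le d : (0 < d)%N -> Fsh 1 d <= (2 ^ d.+1)%:R / (d.+1)`!%:R.
Proof.
move=> d_gt0; rewrite Fsh1E //.
have D_gt1 : 1 < (d.+1)`!%:R :> rat.
  by rewrite ltr1n (fact_lt_factS (_ : 0 < 1 <= d)%N) ?d_gt0.
have sum_le : \sum_(t < d) Fsh t.+2 d <= (2 ^ d.+1)%:R - d%:R - 2.
  have -> : (2 ^ d.+1)%:R - d%:R - 2 = (\sum_(t < d) 'C(d.+1, t.+2))%:R :> rat.
    by rewrite -sum_bin_ge2 -addn2 !natrD; ring.
  rewrite natr_sum; apply: ler_sum => t _; apply: Fsh_le_bin; have := ltn_ord t; lia.
have pow_le : (2 ^ d.+1)%:R <= (d%:R + 2) * (d.+1)`!%:R :> rat.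
  by rewrite -natrD -natrM ler_nat addn2 -factS expn2_le_factS.
rewrite ler_pdivrMr ?subr_gt0 // mulrAC ler_pdivlMr ?(lt_trans ltr01) //.
move: D_gt1 sum_le pow_le; move: (\sum_(t < d) _) ((d.+1)`!%:R : rat) => S D.
by nra.
Qed.

Lemma Fsh1_ge d : (0 < d)%N -> (10 / 7) ^+ d / ((d.+1)`!%:R * d%:R) <= Fsh 1 d.
Proof.
move=> d_gt0; rewrite Fsh1E //.
have D_gt1 : 1 < (d.+1)`!%:R :> rat.
  by rewrite ltr1n (fact_lt_factS (_ : 0 < 1 <= d)%N) ?d_gt0.
set T := (\sum_(t < d) surj d.+1 t.+2)%N.
have sum_ge : T%:R / (d.+1)`!%:R <= \sum_(t < d) Fsh t.+2 d.
  rewrite natr_sum mulr_suml; apply: ler_sum => t _.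
  by rewrite -fshE //; apply: Fsh_ge; have := ltn_ord t; lia.
suff key : (10 / 7) ^+ d * ((d.+1)`!%:R - 1) <= T%:R * d%:R :> rat.
  have D_gt0 : 0 < (d.+1)`!%:R :> rat by rewrite ltr0n fact_gt0.
  have d_gt0R : 0 < d%:R :> rat by rewrite ltr0n.
  rewrite ler_pdivrMr ?mulr_gt0 // mulrAC ler_pdivlMr ?subr_gt0 //.
  apply: (le_trans key); rewrite mulrA; apply: ler_wpM2r; first exact: ler0n.
  by rewrite -ler_pdivrMr.
have [d1|d_neq1] := eqVneq d 1%N.
  have -> : T = 2%N by rewrite /T d1 big_ord1.
  by rewrite d1 expr1 !factS fact0; lra.
have d_ge2 : (2 <= d)%N by rewrite ltn_neqAle eq_sym d_neq1.
have fub_ge := fubini_ge d.+1; rewrite fubiniS natrD -/T exprS in fub_ge.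
have D_ge : 2 * d%:R <= (d.+1)`!%:R :> rat.
  rewrite -natrM ler_nat; case: (d) d_gt0 => // e _.
  by rewrite !factS; have := fact_gt0 e; nia.
have r_pow_ge1 : 1 <= (10 / 7) ^+ d :> rat by apply: exprn_ege1; lra.
have d_ge2R : 2 <= d%:R :> rat by rewrite (ler_nat _ 2).
have T_ge0 : 0 <= T%:R :> rat by exact: ler0n.
move: fub_ge D_ge r_pow_ge1 d_ge2R T_ge0.
move: (T%:R : rat) ((d.+1)`!%:R : rat) (d%:R : rat) ((10 / 7 : rat) ^+ d) => t D e y.
by nra.
Qed.

Lemma sqrt2_le_10_7 (R : rcfType) : Num.sqrt (2 : R) <= 10 / 7.
Proof.
have s_ge0 : 0 <= Num.sqrt (2 : R) by exact: sqrtr_ge0.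
have s_sqr : Num.sqrt (2 : R) ^+ 2 = 2 by rewrite sqr_sqrtr // ler0n.
move: s_ge0 s_sqr; move: (Num.sqrt 2) => s; rewrite expr2 => *; nra.
Qed.

Theorem proposition2p13 (R : rcfType) (d : nat) (hd : (1 <= d)%N) :
  Num.sqrt (2 : R) ^+ d / ((d.+1)`!%:R * d%:R) <= ratr (Hcoef 1 d)
  /\ ratr (Hcoef 1 d) <= (2 : R) ^+ d.+1 / (d.+1)`!%:R.
Proof.
rewrite Hcoef1_Fsh; split.
- have := Fsh1_ge hd; rewrite -(ler_rat R) => /(le_trans _); apply.
  rewrite rmorphM /= fmorphV rmorphM /= !ratr_nat rmorphXn /=.
  apply: ler_wpM2r; first by rewrite invr_ge0 mulr_ge0 ?ler0n.
  apply: lerXn2r; [exact: sqrtr_ge0 | | exact: sqrt2_le_10_7].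
  by rewrite rmorphM /= fmorphV /= !ratr_nat nnegrE; lra.
- have := Fsh1_le hd; rewrite -(ler_rat R) => /le_trans; apply.
  by rewrite rmorphM /= fmorphV /= !ratr_nat natrX.
Qed.
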